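(* Let $\mathbb G=V_1\times V_2$ be a step-two Carnot group and $f\in\mathcal A_h(\mathbb G)$. Then $f$ is $[V_1,V_1]$-affine, i.e. for every $(x,z)\in\mathbb G$ and every $y,y'\in V_1$, the map $t\in\mathbb R\mapsto f((x,z)\cdot(0,t[y,y']))=f(x,z+t[y,y'])$ is affine.
   Context: A step-two Carnot group is $\mathbb G=V_1\times V_2$, where $V_1,V_2$ are finite-dimensional real vector spaces with $V_2\neq\{0\}$, equipped with a bilinear skew-symmetric map $[\cdot,\cdot]:V_1\times V_1\to V_2$ with $\operatorname{span}\{[x,x']:x,x'\in V_1\}=V_2$, and group law $(x,z)\cdot(x',z')=(x+x',z+z'+[x,x'])$. $[V_1,V_1]:=\{[x,x']:x,x'\in V_1\}$ (identified with $\{0\}\times[V_1,V_1]$). $\mathcal A_h(\mathbb G)$ is the space of $h$-affine maps $f:\mathbb G\to\mathbb R$, i.e. such that for all $(x,z)\in\mathbb G$, $y\in V_1$, $t\mapsto f((x,z)\cdot(ty,0))$ is affine. *)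

From mathcomp Require Import all_boot all_order all_algebra.
From mathcomp Require Import reals.
Set Implicit Arguments. Unset Strict Implicit. Unset Printing Implicit Defensive.
Import Order.TTheory GRing.Theory Num.Theory.
Local Open Scope ring_scope.

(* Finite-dimensional real vector spaces V1, V2 are modelled (up to linear
   isomorphism) as row spaces 'rV[R]_n, 'rV[R]_m over a real field R. *)

Section Carnot.
Variables (R : realType) (n m : nat).

Definition is_bracket (B : 'rV[R]_n -> 'rV[R]_n -> 'rV[R]_m) : Prop :=
  (forall (c : R) x x' y, B (c *: x + x') y = c *: B x y + B x' y) /\
  (forall (c : R) x y y', B x (c *: y + y') = c *: B x y + B x y') /\
  (forall x y, B x y = - B y x).

Definition bracket_spans (B : 'rV[R]_n -> 'rV[R]_n -> 'rV[R]_m) : Prop :=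
  forall z : 'rV[R]_m, exists s : seq (R * ('rV[R]_n * 'rV[R]_n)),
    z = \sum_(p <- s) p.1 *: B p.2.1 p.2.2.

Definition gmul (B : 'rV[R]_n -> 'rV[R]_n -> 'rV[R]_m)
    (p q : 'rV[R]_n * 'rV[R]_m) : 'rV[R]_n * 'rV[R]_m :=
  (p.1 + q.1, p.2 + q.2 + B p.1 q.1).

Definition affine_fun (g : R -> R) : Prop :=
  exists a b : R, forall t, g t = a * t + b.

Definition h_affine (B : 'rV[R]_n -> 'rV[R]_n -> 'rV[R]_m)
    (f : 'rV[R]_n * 'rV[R]_m -> R) : Prop :=
  forall (x : 'rV[R]_n) (z : 'rV[R]_m) (y : 'rV[R]_n),
    affine_fun (fun t => f (gmul B (x, z) (t *: y, 0))).

End Carnot.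

(* Fix t and move from (x, z + t[y,y']) along the horizontal direction y' - t y.
   By h-affinity the value at the base point is the mean of the values at the
   parameters 1 and -1, and the group law turns these two points into
   (x + y', z + [x,y']).(-t y, 0) and (x - y', z - [x,y']).(t y, 0): the
   t-dependence has moved into a horizontal line, on which f is affine again. *)

From mathcomp Require Import all_boot all_order all_algebra.
From mathcomp Require Import reals.
From mathcomp Require Import lra.
Set Implicit Arguments. Unset Strict Implicit. Unset Printing Implicit Defensive.
Import GRing.Theory Num.Theory.
Local Open Scope ring_scope.

Section AffineFunctions.
Variable R : realType.
Implicit Types g h : R -> R.

Lemma affine_fun_ext g h : (forall t, g t = h t) -> affine_fun h -> affine_fun g.
Proof. by move=> eq_gh [a [b Hh]]; exists a, b => t; rewrite eq_gh. Qed.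

Lemma affine_funD g h :
  affine_fun g -> affine_fun h -> affine_fun (fun t => g t + h t).
Proof.
move=> [a [b Hg]] [c [d Hh]]; exists (a + c), (b + d) => t.
by rewrite Hg Hh; lra.
Qed.

Lemma affine_funMr g c : affine_fun g -> affine_fun (fun t => g t * c).
Proof. by move=> [a [b Hg]]; exists (a * c), (b * c) => t; rewrite Hg; lra. Qed.

Lemma affine_fun_comp_opp g : affine_fun g -> affine_fun (fun t => g (- t)).
Proof. by move=> [a [b Hg]]; exists (- a), b => t; rewrite Hg; lra. Qed.

Lemma affine_fun_midpoint g : affine_fun g -> g 0 = (g 1 + g (-1)) / 2.
Proof. by move=> [a [b Hg]]; rewrite !Hg; lra. Qed.

End AffineFunctions.

Section Bracket.
Variables (R : realType) (n m : nat) (B : 'rV[R]_n -> 'rV[R]_n -> 'rV[R]_m).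
Hypothesis HB : is_bracket B.

Lemma bracket_skew x y : B x y = - B y x.
Proof. exact: HB.2.2. Qed.

Lemma bracket0l y : B 0 y = 0.
Proof.
have := HB.1 1 0 0 y; rewrite !scale1r addr0 => twice.
by apply: (addrI (B 0 y)); rewrite addr0 -twice.
Qed.

Lemma bracketDl x x' y : B (x + x') y = B x y + B x' y.
Proof. by have := HB.1 1 x x' y; rewrite !scale1r. Qed.

Lemma bracketZl c x y : B (c *: x) y = c *: B x y.
Proof. by have := HB.1 c x 0 y; rewrite !addr0 bracket0l addr0. Qed.

Lemma bracketZr c x y : B x (c *: y) = c *: B x y.
Proof. by rewrite bracket_skew bracketZl -scalerN -bracket_skew. Qed.

Lemma bracketDr x y y' : B x (y + y') = B x y + B x y'.
Proof. by rewrite !(bracket_skew x) bracketDl opprD. Qed.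

Lemma bracket0r x : B x 0 = 0.
Proof. by rewrite -(scale0r 0) bracketZr scale0r. Qed.

Lemma gmul_vertical x z w : gmul B (x, z) (0, w) = (x, z + w).
Proof. by rewrite /gmul /= addr0 bracket0r addr0. Qed.

(* (x, w).(u + v, 0) = (x, w).(u, 0).(v, 0).(0, -[u, v]) *)
Lemma gmul_horizontalD x w u v :
  gmul B (x, w) (u + v, 0) = gmul B (x + u, w + B x u - B u v) (v, 0).
Proof.
rewrite /gmul /= !addr0 addrA bracketDl bracketDr; congr pair.
by rewrite -!addrA [- _ + _]addrCA addNr addr0.
Qed.

(* The correction [s y', -s t y] = s^2 t [y, y'] cancels the shift t [y, y']. *)
Lemma gmul_shear x z y y' s t : s ^+ 2 = 1 ->
  gmul B (x, z + t *: B y y') (s *: (y' - t *: y), 0) =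
  gmul B (x + s *: y', z + s *: B x y') ((- (s * t)) *: y, 0).
Proof.
move=> s2.
rewrite scalerBr scalerA -scaleNr gmul_horizontalD; congr (gmul _ (_, _) _).
rewrite bracketZl !bracketZr (bracket_skew y') !scalerA.
by rewrite mulrN mulrA -expr2 s2 mul1r scaleNr scalerN !opprK addrAC addrK.
Qed.

End Bracket.

Theorem proposition3p1 (R : realType) (n m : nat)
    (B : 'rV[R]_n -> 'rV[R]_n -> 'rV[R]_m)
    (Hm : (0 < m)%N) (HB : is_bracket B) (Hspan : bracket_spans B)
    (f : 'rV[R]_n * 'rV[R]_m -> R) (Hf : h_affine B f) :
  forall (x : 'rV[R]_n) (z : 'rV[R]_m) (y y' : 'rV[R]_n),
    affine_fun (fun t : R => f (gmul B (x, z) (0, t *: B y y'))).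
Proof.
move=> x z y y'.
have mean t : f (gmul B (x, z) (0, t *: B y y')) =
    (f (gmul B (x + y', z + B x y') ((- t) *: y, 0))
     + f (gmul B (x - y', z - B x y') (t *: y, 0))) / 2.
  have := affine_fun_midpoint (Hf x (z + t *: B y y') (y' - t *: y)).
  rewrite /= scale0r !(gmul_vertical HB) addr0.
  rewrite !(gmul_shear HB) ?expr1n ?sqrrN ?expr1n //.
  by rewrite !scale1r mul1r mulN1r opprK !scaleN1r.
apply: (affine_fun_ext mean); apply: affine_funMr; apply: affine_funD.
  exact: affine_fun_comp_opp (Hf _ _ _).
exact: Hf.
Qed.
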